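(* Let $G$ be a cubic graph with a bridge $e$, and let $H_1$ and $H_2$ be the components of $G-e$. Then $c_2(G)=c_2(H_1)+c_2(H_2)$.
   Context: For a graph $G=(V,E)$ and a set $S_0\subseteq V$, the irreversible $2$-threshold conversion process is defined by: for $t=1,2,\dots$, $S_t$ is obtained from $S_{t-1}$ by adjoining all vertices having at least $2$ neighbours in $S_{t-1}$. $S_0$ is a $2$-conversion set if $S_t=V$ for some $t\ge 0$, and $c_2(G)$ is the minimum size of a $2$-conversion set of $G$ (defined for any graph, not only cubic ones). *)

From mathcomp Require Import all_boot.
From mathcomp Require Import boolp.
Set Implicit Arguments. Unset Strict Implicit. Unset Printing Implicit Defensive.

(* A graph is given by a vertex set V : {set T} inside a finite type T and an
   adjacency relation r : rel T (only edges with both ends in V matter). *)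

Definition conv_step (T : finType) (V : {set T}) (r : rel T) (S : {set T}) : {set T} :=
  S :|: [set x in V | 2 <= #|[set y in V | (y \in S) && r x y]|].

Definition is_2conv_set (T : finType) (V : {set T}) (r : rel T) (S0 : {set T}) : Prop :=
  S0 \subset V /\ exists t : nat, iter t (conv_step V r) S0 = V.

(* c_2 of (V, r): minimum size of a 2-conversion set (V itself is one). *)
Definition c2 (T : finType) (V : {set T}) (r : rel T) : nat :=
  \big[minn/#|V|]_(S : {set T} | `[< is_2conv_set V r S >]) #|S|.

Definition simple_graph (T : finType) (e : rel T) : Prop :=
  symmetric e /\ irreflexive e.
Definition cubic (T : finType) (e : rel T) : Prop :=
  forall x : T, #|[set y | e x y]| = 3.
Definition connected (T : finType) (e : rel T) : Prop :=
  forall x y : T, connect e x y.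

Definition del_edge (T : finType) (e : rel T) (u v : T) : rel T :=
  fun x y => e x y && ([set x; y] != [set u; v]).

From mathcomp Require Import all_boot.
From mathcomp Require Import boolp zify.
Set Implicit Arguments. Unset Strict Implicit. Unset Printing Implicit Defensive.

(* A set S0 fails to be a 2-conversion set exactly when some nonempty set W
   disjoint from S0 is immune: every vertex of W has at most one neighbour
   outside W, so the process never enters W.  An immune set of G meets each
   side H_i in an immune set of H_i, so the union of conversion sets of H_1
   and H_2 converts G.  Conversely an immune set W of H_i is immune in G except
   that the bridge end u may lose one more neighbour; peeling vertices of
   degree one starting from u leaves a nonempty subgraph of minimum degree 2,
   which in a cubic graph is immune.  Hence the trace of a conversion set of G
   on H_i converts H_i, and the two traces are disjoint. *)

Section Immune.
Variable T : finType.
Implicit Types (V W S X A B C H : {set T}) (r e d : rel T).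

Definition deg_in r X (x : T) := #|[set y in X | r x y]|.

Definition immune V r W := forall w, w \in W -> deg_in r (V :\: W) w <= 1.

Lemma conv_step_sub V r S : S \subset V -> conv_step V r S \subset V.
Proof.
move=> SV; apply/subsetP=> x; rewrite !inE => /orP[/(subsetP SV) //|].
by case/andP.
Qed.

Lemma conv_step_disjoint V r W S :
  immune V r W -> [disjoint W & S] -> [disjoint W & conv_step V r S].
Proof.
move=> immW dWS; apply/pred0P=> x /=; apply/negbTE/andP=> -[xW].
rewrite !inE (disjointFr dWS xW) /= => /andP[_]; apply/negP; rewrite -ltnNge.
apply: leq_trans (immW x xW); apply: subset_leq_card; apply/subsetP=> y.
by rewrite !inE => /and3P[yV yS ->]; rewrite yV (disjointFl dWS yS).
Qed.

Lemma iter_conv_step_disjoint V r W S t :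
  immune V r W -> [disjoint W & S] -> [disjoint W & iter t (conv_step V r) S].
Proof. by move=> immW dWS; elim: t => //= t; apply: conv_step_disjoint. Qed.

Lemma iter_extensive_fixed (f : {set T} -> {set T}) S :
  (forall X, X \subset f X) -> exists t, f (iter t f S) = iter t f S.
Proof.
move=> f_ext.
suff grow t : (exists k, f (iter k f S) = iter k f S) \/ t <= #|iter t f S|.
  by case: (grow #|T|.+1) => // /leq_trans/(_ (max_card _)); rewrite ltnn.
elim: t => [|t [fixed|IH]]; [by right | by left |].
have [fixed|moved] := eqVneq (f (iter t f S)) (iter t f S); first by left; exists t.
right; apply: leq_ltn_trans IH (proper_card _).
by rewrite properEneq eq_sym moved f_ext.
Qed.

Lemma is_2conv_setP V r S : S \subset V ->
  is_2conv_set V r S <->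
  (forall W, W \subset V -> immune V r W -> [disjoint W & S] -> W = set0).
Proof.
move=> SV; split=> [[_ [t convS]] W WV immW dWS|no_immune].
  have := iter_conv_step_disjoint t immW dWS; rewrite convS.
  by move/disjoint_setI0; move/setIidPl: WV => ->.
have [t fixed] := @iter_extensive_fixed (conv_step V r) S (fun X => subsetUl X _).
set F := iter t _ S in fixed.
have FV : F \subset V by rewrite /F; elim: t {F fixed} => //= t; apply: conv_step_sub.
have SF : S \subset F.
  by rewrite /F; elim: t {F fixed FV} => //= t /subset_trans; apply; apply: subsetUl.
split=> //; exists t; apply/eqP; rewrite eqEsubset FV -setD_eq0 /=.
apply/eqP/no_immune; first exact: subsetDl.
- move=> w; rewrite inE => /andP[wF wV]; rewrite leqNgt; apply: contraNN wF => deg2.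
  rewrite -/F -fixed inE; apply/orP; right; rewrite inE wV.
  apply: leq_trans deg2 _; apply: subset_leq_card; apply/subsetP=> y.
  by rewrite !inE; case: (y \in F); case: (y \in V).
- by rewrite -/F disjoint_sym disjoints_subset setCD (subset_trans SF) ?subsetUr.
Qed.

Lemma c2_min V r S : is_2conv_set V r S -> c2 V r <= #|S|.
Proof.
move=> convS; rewrite /c2 -big_filter.
have : S \in [seq X <- index_enum {set T} | `[< is_2conv_set V r X >]].
  by rewrite mem_filter mem_index_enum andbT; apply/asboolP.
elim: [seq _ <- _ | _] => // X s IHs; rewrite inE big_cons.
by case/predU1P=> [<-|/IHs]; [apply: geq_minl | apply/leq_trans/geq_minr].
Qed.

Lemma c2_attained V r : exists2 S, is_2conv_set V r S & c2 V r = #|S|.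
Proof.
rewrite /c2; apply: (big_ind (fun n => exists2 S, is_2conv_set V r S & n = #|S|)).
- by exists V => //; split=> //; exists 0.
- by move=> _ _ [A convA ->] [B convB ->]; rewrite /minn; case: ltnP; [exists A | exists B].
- by move=> S /asboolP convS; exists S.
Qed.

Lemma immune_setI V A r e W : subrel r e -> A \subset V ->
  immune V e W -> immune A r (W :&: A).
Proof.
move=> sub_re AV immW w; rewrite inE => /andP[wW _]; apply: leq_trans (immW w wW).
apply: subset_leq_card; apply/subsetP=> y; rewrite !inE => /andP[/andP[yWA yA] ryw].
by rewrite (subsetP AV y yA) (sub_re _ _ ryw) !andbT; move: yWA; rewrite yA andbT.
Qed.

Lemma is_2conv_setU V A B r e SA SB : subrel r e -> A :|: B = V ->
  is_2conv_set A r SA -> is_2conv_set B r SB -> is_2conv_set V e (SA :|: SB).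
Proof.
move=> sub_re <- convA convB; have [SAA _] := convA; have [SBB _] := convB.
apply/is_2conv_setP; first exact: setUSS.
move=> W WV immW dW.
have trace_empty X (SX : {set T}) : X \subset A :|: B -> SX \subset SA :|: SB ->
    is_2conv_set X r SX -> W :&: X = set0.
  move=> XV SXS convX; have [SXX _] := convX.
  apply: ((is_2conv_setP r SXX).1 convX (W :&: X)); first exact: subsetIr.
    exact: immune_setI sub_re XV immW.
  by apply: disjointWl (subsetIl W X) _; apply: disjointWr SXS dW.
rewrite -(setIidPl WV) setIUr (trace_empty A SA) ?(trace_empty B SB) ?setU0 //.
all: by rewrite ?subsetUl ?subsetUr.
Qed.

Lemma deg_in_subrel r e X x : subrel r e -> deg_in r X x <= deg_in e X x.
Proof.
by move=> sub_re; apply: subset_leq_card; apply/subsetP=> y; rewrite !inE => /andP[-> /sub_re].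
Qed.

Lemma deg_in_setC r X x : deg_in r X x + deg_in r (~: X) x = #|[set y | r x y]|.
Proof.
rewrite /deg_in -(cardsID X [set y | r x y]).
by congr (_ + _); apply: eq_card=> y; rewrite !inE andbC.
Qed.

Lemma deg_in_setD1 r X x v : deg_in r X x <= deg_in r (X :\ v) x + r x v.
Proof.
rewrite /deg_in (cardsD1 v) addnC leq_add //; last by rewrite inE; case: (v \in X).
by apply: subset_leq_card; apply/subsetP=> y; rewrite !inE => /andP[-> /andP[-> ->]].
Qed.

Lemma exists_min_deg2_subset e X v : symmetric e -> irreflexive e ->
  X != set0 -> {in X, forall x, 2 <= deg_in e X x + (x == v)} ->
  exists2 C : {set T}, C \subset X & C != set0 /\ {in C, forall c, 2 <= deg_in e C c}.
Proof.
move=> sym irr; have [n] := ubnP #|X|; elim: n => // n IH in X v *.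
rewrite ltnS => Xn X0 degX.
have [min_deg2|] := boolP [forall x in X, 2 <= deg_in e X x].
  by exists X => //; split=> // c cX; apply: (implyP (forallP min_deg2 c)).
rewrite negb_forall_in => /existsP[x /andP[xX]]; rewrite -ltnNge ltnS => xdeg1.
have xv : x = v.
  by apply/eqP; apply: contraTT (degX x xX) => /negbTE->; rewrite addn0 -leqNgt.
move: xX xdeg1; rewrite {}xv {x} => vX vdeg1.
have vdeg_pos : 0 < deg_in e X v by have := degX v vX; rewrite eqxx addn1.
have /cards1P[y vnbr] : #|[set y in X | e v y]| == 1 by rewrite eqn_leq vdeg1.
have [yX evy] : y \in X /\ e v y by move: (set11 y); rewrite -vnbr inE => /andP.
have yv : y != v by apply: contraTneq evy => ->; rewrite irr.
have [C CX [C0 degC]] : exists2 C : {set T}, C \subset X :\ v &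
    C != set0 /\ {in C, forall c, 2 <= deg_in e C c}.
  apply: (IH _ y); first by rewrite (cardsD1 v X) vX in Xn.
    by apply/set0Pn; exists y; rewrite !inE yv.
  move=> x; rewrite !inE => /andP[xv xX']; move: (degX x xX').
  rewrite (negbTE xv) addn0 => /leq_trans; apply.
  apply: leq_trans (deg_in_setD1 e X x v) _; rewrite leq_add2l.
  have [exv|] := boolP (e x v) => //.
  have : x \in [set y in X | e v y] by rewrite inE xX' sym exv.
  by rewrite vnbr inE => /eqP->; rewrite eqxx.
by exists C => //; apply: subset_trans CX (subsetDl _ _).
Qed.

Lemma cubic_min_deg2_immune e C : cubic e ->
  {in C, forall c, 2 <= deg_in e C c} -> immune [set: T] e C.
Proof.
move=> cub degC c cC; rewrite setTD.
have := deg_in_setC e C c; rewrite cub; have := degC c cC; lia.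
Qed.

Lemma cut_side_deg e d H W u v w : cubic e -> subrel d e ->
  (forall w y, w \in H -> e w y -> y \in H /\ d w y \/ w = u /\ y = v) ->
  W \subset H -> immune H d W -> w \in W -> 2 <= deg_in e W w + (w == u).
Proof.
move=> cub sub_de edgeH WH immW wW.
set bridge := if w == u then [set v] else set0.
have bridge_card : #|bridge| = (w == u).
  by rewrite /bridge; case: (w == u); rewrite ?cards1 ?cards0.
have nbr_split : [set y | e w y] \subset
    [set y in W | d w y] :|: [set y in H :\: W | d w y] :|: bridge.
  apply/subsetP=> y; rewrite !inE => /(edgeH w y (subsetP WH w wW)).
  case=> [[-> ->]|[wu ->]]; last by rewrite /bridge wu eqxx set11 orbT.
  by case: (y \in W).
have := leq_trans (subset_leq_card nbr_split) (leq_card_setU _ _).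
have := (leq_card_setU [set y in W | d w y] [set y in H :\: W | d w y]).1.
have := immW w wW; have := deg_in_subrel W w sub_de.
rewrite cub bridge_card /deg_in; lia.
Qed.

Lemma cut_side_2conv e d H u v S : simple_graph e -> cubic e -> subrel d e ->
  (forall w y, w \in H -> e w y -> y \in H /\ d w y \/ w = u /\ y = v) ->
  is_2conv_set [set: T] e S -> is_2conv_set H d (S :&: H).
Proof.
move=> [sym irr] cub sub_de edgeH convS.
apply/is_2conv_setP; first exact: subsetIr.
move=> W WH immW dWS; apply/eqP; apply: contraT => W0.
have [C CW [C0 degC]] :=
  exists_min_deg2_subset sym irr W0 (fun w => cut_side_deg cub sub_de edgeH WH immW).
have dCS : [disjoint C & S].
  apply: disjointWl CW _.
  by rewrite -setI_eq0 -(setIidPl WH) -setIA [H :&: S]setIC setI_eq0.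
have immC := cubic_min_deg2_immune cub degC.
by move: C0; rewrite ((is_2conv_setP e (subsetT S)).1 convS C (subsetT C) immC dCS) eqxx.
Qed.

Lemma eq_set2 (x y a b : T) :
  [set x; y] = [set a; b] -> x = a /\ y = b \/ x = b /\ y = a.
Proof.
move=> E.
have /set2P xab : x \in [set a; b] by rewrite -E set21.
have /set2P yab : y \in [set a; b] by rewrite -E set22.
have /set2P axy : a \in [set x; y] by rewrite E set21.
have /set2P bxy : b \in [set x; y] by rewrite E set22.
by case: xab yab axy bxy => -> [] -> [] ? [] ?; subst; auto.
Qed.

Section Bridge.
Variables (e : rel T) (u v : T).
Hypothesis e_sym : symmetric e.

Local Notation d := (del_edge e u v).
Local Notation side x := [set y | connect d x y].

Lemma del_edge_sub : subrel d e.
Proof. by move=> x y /andP[]. Qed.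

Lemma del_edgeC : d = del_edge e v u.
Proof. by apply/funext=> x; apply/funext=> y; rewrite /del_edge [[set u; v]]setUC. Qed.

Lemma del_edge_sym : symmetric d.
Proof. by move=> x y; rewrite /del_edge e_sym setUC. Qed.

Lemma del_edgeN x y : e x y -> ~~ d x y -> x = u /\ y = v \/ x = v /\ y = u.
Proof. by rewrite /del_edge => -> /negPn/eqP/eq_set2. Qed.

Lemma bridge_sides_cover : connected e -> side u :|: side v = [set: T].
Proof.
move=> conn; apply/setP=> x; rewrite !inE.
have dconn := sym_connect_sym del_edge_sym.
have closed_sides : closed e [pred z | connect d u z || connect d v z].
  move=> a b eab; rewrite !inE; have [dab|ndab] := boolP (d a b).
    by rewrite !(same_connect_r dconn (connect1 dab)).
  by case: (del_edgeN eab ndab) => -[-> ->]; rewrite !connect0 ?orbT.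
by have := closed_connect closed_sides (conn u x); rewrite !inE connect0 => <-.
Qed.

Hypothesis bridge : ~~ connect d u v.

Lemma bridge_sides_disjoint : [disjoint side u & side v].
Proof.
apply/pred0P=> x /=; rewrite !inE; apply/negbTE/andP=> -[ux vx].
by move/negP: bridge; apply; rewrite (connect_trans ux) // (sym_connect_sym del_edge_sym).
Qed.

Lemma bridge_side_edge w y : w \in side u -> e w y ->
  y \in side u /\ d w y \/ w = u /\ y = v.
Proof.
rewrite inE => uw ewy; have [dwy|ndwy] := boolP (d w y).
  by left; rewrite inE (connect_trans uw (connect1 dwy)).
case: (del_edgeN ewy ndwy) => [|[wv _]]; first by right.
by move: uw; rewrite wv (negbTE bridge).
Qed.

Lemma bridge_side_2conv S : simple_graph e -> cubic e ->
  is_2conv_set [set: T] e S -> is_2conv_set (side u) d (S :&: side u).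
Proof. by move=> ge cub; apply: cut_side_2conv ge cub del_edge_sub bridge_side_edge. Qed.

End Bridge.
End Immune.

Theorem lemma5p4 (T : finType) (e : rel T) (u v : T) :
  simple_graph e -> connected e -> cubic e ->
  e u v -> ~~ connect (del_edge e u v) u v ->
  c2 [set: T] e =
    c2 [set x | connect (del_edge e u v) u x] (del_edge e u v)
  + c2 [set x | connect (del_edge e u v) v x] (del_edge e u v).
Proof.
move=> ge conn cub _ bridge; have [e_sym _] := ge.
have bridge' : ~~ connect (del_edge e v u) v u.
  by rewrite -del_edgeC (sym_connect_sym (del_edge_sym u v e_sym)).
apply/anti_leq/andP; split.
  have [S1 conv1 ->] := c2_attained [set x | connect (del_edge e u v) u x] (del_edge e u v).
  have [S2 conv2 ->] := c2_attained [set x | connect (del_edge e u v) v x] (del_edge e u v).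
  apply: leq_trans (leq_card_setU S1 S2); apply: c2_min.
  exact: is_2conv_setU (@del_edge_sub _ e u v) (bridge_sides_cover u v e_sym conn) conv1 conv2.
have [S convS ->] := c2_attained [set: T] e.
have conv1 := bridge_side_2conv bridge ge cub convS.
have conv2 := bridge_side_2conv bridge' ge cub convS.
rewrite -del_edgeC in conv2.
rewrite -(cardsID [set x | connect (del_edge e u v) u x] S).
apply: leq_add (c2_min conv1) (leq_trans (c2_min conv2) (subset_leq_card _)).
by rewrite setDE setIS // -disjoints_subset disjoint_sym bridge_sides_disjoint.
Qed.
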